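(* The algebra $(\mathcal{T}_\bullet,\hat{\ast})$ is a free associative algebra, freely generated by the set of non-empty reduced set compositions in $\mathsf{Comp}=\bigcup_{n\ge0}\mathsf{Comp}_n$.
   Context: $[n]=\{1,\ldots,n\}$. A set composition of a finite set $S\subset\mathbb{N}$ is a tuple $(P_1,\ldots,P_k)$ of pairwise disjoint non-empty subsets with union $S$; $\mathsf{Comp}_n$ is the set of set compositions of $[n]$ ($\mathsf{Comp}_0=\{\text{empty tuple}\}$). $\mathcal{T}_n$ is the free $\mathbb{Z}$-module on $\mathsf{Comp}_n$, $\mathcal{T}_\bullet=\bigoplus_{n\ge0}\mathcal{T}_n$. For finite $S,T\subset\mathbb{N}$ with $|S|=|T|$, $\mathsf{is}_{S,T}$ maps a set composition of $S$ to one of $T$ by applying the order-preserving bijection $S\to T$ blockwise. For set compositions $P$ of $S$ and $Q$ of $T$ with $S\cap T=\emptyset$, $P\ast Q$ is the concatenated tuple. The symmetrized product is defined bilinearly, for $P\in\mathsf{Comp}_p$, $Q\in\mathsf{Comp}_q$, by $P\,\hat{\ast}\,Q=\sum\mathsf{is}_{[p],A}(P)\ast\mathsf{is}_{[q],B}(Q)$, summed over all ordered pairs $(A,B)$ with $A\sqcup B=[p+q]$, $|A|=p$, $|B|=q$; its unit is the empty tuple. A set composition $(P_1,\ldots,P_k)\in\mathsf{Comp}_n$ is reduced if there is no $(a,m)$ with $1\le a<k$, $m<n$ and $P_1\cup\cdots\cup P_a=[m]$. *)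

From mathcomp Require Import all_boot all_algebra.
From mathcomp Require Import finmap.
Set Implicit Arguments. Unset Strict Implicit. Unset Printing Implicit Defensive.
Import GRing.Theory.
Local Open Scope fset_scope.

Definition scomp := seq {fset nat}.

Definition natrange (n : nat) : {fset nat} := [fset i | i in iota 1 n].

Definition bunion (P : scomp) : {fset nat} := \bigcup_(B <- P) B.

Definition is_setcomp (S : {fset nat}) (P : scomp) : bool :=
  all (fun B => B != fset0) P
  && pairwise (fun A B => [disjoint A & B]) P
  && (bunion P == S).

Definition is_comp (n : nat) (P : scomp) : bool := is_setcomp (natrange n) P.

Definition in_Comp (P : scomp) : Prop := exists n, is_comp n P.

Definition reduced (n : nat) (P : scomp) : Prop :=
  ~ (exists a m, [/\ 1 <= a, a < size P, m < n & bunion (take a P) = natrange m]).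

(* is_{[p],A}: blockwise the order-preserving bijection [p] -> A,
   i |-> the i-th smallest element of A. *)
Definition relabel (A : {fset nat}) (P : scomp) : scomp :=
  map (fun B : {fset nat} =>
         [fset nth 0 (sort leq (enum_fset A)) i.-1 | i in B]) P.

(* the elements of T_bullet: finite formal Z-linear combinations *)
Definition Tel := seq (int * scomp).

Definition tcoef (x : Tel) (P : scomp) : int := (\sum_(e <- x | e.2 == P) e.1)%R.

Definition teq (x y : Tel) : Prop := forall P, tcoef x P = tcoef y P.

Definition valid (x : Tel) : Prop := forall e, e \in x -> in_Comp e.2.

Definition tscale (a : int) (x : Tel) : Tel := [seq ((a * e.1)%R, e.2) | e <- x].

Definition basis_el (P : scomp) : Tel := [:: (1%R, P)].

Definition tunit : Tel := basis_el [::].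

Definition deg (P : scomp) : nat := sumn (map (fun B : {fset nat} => #|` B|) P).

Definition ofin (N : nat) (A : {set 'I_N}) : {fset nat} :=
  [fset (val i).+1 | i in enum A].

(* the terms of P (hat-ast) Q, for P in Comp_p, Q in Comp_q:
   one term for each ordered pair (A,B), A \sqcup B = [p+q], |A| = p *)
Definition shuffle_terms (P Q : scomp) : seq scomp :=
  let p := deg P in let q := deg Q in
  [seq relabel (ofin A) P ++ relabel (ofin (~: A)) Q
  | A <- enum [set A : {set 'I_(p + q)} | #|A| == p]].

Definition tmul (x y : Tel) : Tel :=
  flatten [seq [seq ((e.1 * f.1)%R, R) | R <- shuffle_terms e.2 f.2] | e <- x, f <- y].

Definition monomial (w : seq scomp) : Tel := foldr (fun g m => tmul (basis_el g) m) tunit w.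

Definition lincomb (c : seq (int * seq scomp)) : Tel :=
  flatten [seq tscale e.1 (monomial e.2) | e <- c].

Definition generator (g : scomp) : Prop :=
  exists n, [/\ is_comp n g, g <> [::] & reduced n g].

(* The term R occurs in the symmetrized product of P and Q (with multiplicity
   one) exactly when R is a set composition of [p + q] whose first |P| blocks
   standardize to P and whose remaining blocks standardize to Q; associativity
   and the unit laws follow by counting with this criterion.

   Call a a cut of R when the first a blocks of R cover an initial segment [m].
   Splitting at the first cut writes every set composition uniquely as a
   shifted concatenation g_1 . g_2 . ... . g_k of reduced ones.  A term of the
   product of a reduced g with T has no cut strictly inside g, so every term of
   the monomial g_1 * ... * g_k has at most k cuts, and g_1 . ... . g_k is its
   only term with k cuts, occurring once.  The monomials in the generators are
   thus unitriangular with respect to the basis ordered by number of cuts,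
   which gives both spanning and linear independence. *)

From mathcomp Require Import all_boot all_algebra.
From mathcomp Require Import finmap.
From mathcomp Require Import zify ring.
Set Implicit Arguments. Unset Strict Implicit. Unset Printing Implicit Defensive.
Import GRing.Theory.

Section OrderIsomorphisms.
Local Open Scope fset_scope.

Definition fsort (A : {fset nat}) : seq nat := sort leq (enum_fset A).

(* 1-based: [fnth A 1] is the least element of [A]; [relabel A] applies [fnth A]. *)
Definition fnth (A : {fset nat}) (i : nat) : nat := nth 0 (fsort A) i.-1.

Definition frank (A : {fset nat}) (x : nat) : nat := count (leq^~ x) (enum_fset A).

Lemma relabelE A P : relabel A P = [seq [fset fnth A i | i in B] | B : {fset nat} <- P].
Proof. by []. Qed.

Lemma fsort_sorted A : sorted ltn (fsort A).
Proof.
by rewrite ltn_sorted_uniq_leq sort_uniq fset_uniq (sort_sorted leq_total).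
Qed.

Lemma size_fsort A : size (fsort A) = #|` A|.
Proof. by rewrite size_sort cardfE. Qed.

Lemma mem_fsort A x : (x \in fsort A) = (x \in A).
Proof. by rewrite mem_sort. Qed.

Lemma count_leq_nth_sorted s i : sorted ltn s -> i < size s ->
  count (leq^~ (nth 0 s i)) s = i.+1.
Proof.
elim: s i => [|y s IH] i //= s_sorted.
have y_min : all (ltn y) s := order_path_min ltn_trans s_sorted.
case: i => [|i] /= lt_i_s.
  rewrite leqnn add1n; congr _.+1; apply/eqP; rewrite -leqn0 leqNgt -has_count.
  by apply/hasPn => z /(allP y_min); rewrite /= ltnNge.
have lt_y_nth : y < nth 0 s i by apply: (allP y_min); apply: mem_nth.
by rewrite (ltnW lt_y_nth) IH // (path_sorted s_sorted).
Qed.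

Lemma fnth_mem A i : 0 < i <= #|` A| -> fnth A i \in A.
Proof. by case: i => // i lt_i_A; rewrite -mem_fsort mem_nth ?size_fsort. Qed.

Lemma frankE A x : frank A x = count (leq^~ x) (fsort A).
Proof. by apply/permP; rewrite perm_sym perm_sort. Qed.

Lemma frank_fnth A i : 0 < i <= #|` A| -> frank A (fnth A i) = i.
Proof.
case: i => // i lt_i_A; rewrite frankE.
by rewrite count_leq_nth_sorted ?fsort_sorted ?size_fsort.
Qed.

Lemma fnth_frank A x : x \in A -> fnth A (frank A x) = x.
Proof.
rewrite -mem_fsort => x_in; have x_eq : fnth A (index x (fsort A)).+1 = x.
  by rewrite /fnth nth_index.
by rewrite -{1}x_eq frank_fnth //= -size_fsort index_mem.
Qed.

Lemma frank_range A x : x \in A -> 0 < frank A x <= #|` A|.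
Proof.
move=> x_in; rewrite frankE -size_fsort count_size andbT -has_count.
by apply/hasP; exists x; rewrite ?mem_fsort.
Qed.

Lemma frank_inj A : {in A &, injective (frank A)}.
Proof. by move=> x y x_in y_in eq_xy; rewrite -(fnth_frank x_in) eq_xy fnth_frank. Qed.

Lemma fnth_inj A : {in [pred i | 0 < i <= #|` A|] &, injective (fnth A)}.
Proof. by move=> i j i_in j_in eq_ij; rewrite -(frank_fnth i_in) eq_ij frank_fnth. Qed.

Lemma leq_fnth A i j : 0 < i <= #|` A| -> 0 < j <= #|` A| ->
  (fnth A i <= fnth A j) = (i <= j).
Proof.
case: i j => // i [] // j /= lt_i_A lt_j_A; rewrite ltnS.
have sorted_A := fsort_sorted A; rewrite -size_fsort in lt_i_A lt_j_A.
case: (ltngtP i j) => [lt_ij|lt_ji|->]; last by rewrite leqnn.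
  exact/ltnW/(sorted_ltn_nth ltn_trans 0 sorted_A).
by apply/negbTE; rewrite -ltnNge; apply: (sorted_ltn_nth ltn_trans 0 sorted_A).
Qed.

Lemma leq_frank A x y : x \in A -> y \in A -> (frank A x <= frank A y) = (x <= y).
Proof.
move=> x_in y_in; rewrite -{2}(fnth_frank x_in) -{2}(fnth_frank y_in).
by rewrite leq_fnth ?frank_range.
Qed.

Lemma frank_enum A x s : uniq s -> (forall y, (y \in s) = (y \in A) && (y <= x)) ->
  frank A x = size s.
Proof.
move=> s_uniq mem_s; rewrite /frank -size_filter; apply: perm_size.
apply: uniq_perm; rewrite ?filter_uniq ?fset_uniq // => y.
by rewrite mem_filter mem_s andbC.
Qed.

Lemma mem_natrange n i : (i \in natrange n) = (0 < i <= n).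
Proof.
apply/imfsetP/idP => [[j /= + ->]|i_in]; first by rewrite mem_iota add1n.
by exists i; rewrite //= mem_iota add1n.
Qed.

Lemma card_natrange n : #|` natrange n| = n.
Proof. by rewrite card_imfset //= undup_id ?iota_uniq // size_iota. Qed.

End OrderIsomorphisms.

Section SetCompositions.
Local Open Scope fset_scope.

Definition is_scomp (P : scomp) : bool :=
  all (fun B => B != fset0) P && pairwise (fun A B => [disjoint A & B]) P.

Definition std (P : scomp) : scomp :=
  [seq [fset frank (bunion P) x | x in B] | B : {fset nat} <- P].

Lemma is_setcompE S P : is_setcomp S P = is_scomp P && (bunion P == S).
Proof. by []. Qed.

Lemma bunion_nil : bunion [::] = fset0.
Proof. by rewrite /bunion big_nil. Qed.

Lemma bunion_cons B P : bunion (B :: P) = B `|` bunion P.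
Proof. by rewrite /bunion big_cons. Qed.

Lemma bunion_cat P Q : bunion (P ++ Q) = bunion P `|` bunion Q.
Proof. by rewrite /bunion big_cat. Qed.

Lemma block_sub_bunion (B : {fset nat}) (P : scomp) : B \in P -> {subset B <= bunion P}.
Proof. by move=> B_in x x_in; apply/bigfcupP; exists B; rewrite ?B_in. Qed.

Lemma bunion_take_drop a P : bunion P = bunion (take a P) `|` bunion (drop a P).
Proof. by rewrite -bunion_cat cat_take_drop. Qed.

Lemma bunion_imfset (f : nat -> nat) P :
  bunion [seq [fset f x | x in B] | B : {fset nat} <- P] = [fset f x | x in bunion P].
Proof.
elim: P => [|B P IH] /=; first by rewrite !bunion_nil imfset0.
by rewrite !bunion_cons IH imfsetU.
Qed.

Lemma deg_cons B P : deg (B :: P) = (#|` B| + deg P)%N.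
Proof. by []. Qed.

Lemma deg_cat P Q : deg (P ++ Q) = (deg P + deg Q)%N.
Proof. by rewrite /deg map_cat sumn_cat. Qed.

Lemma deg_take_drop a P : deg P = (deg (take a P) + deg (drop a P))%N.
Proof. by rewrite -deg_cat cat_take_drop. Qed.

Lemma all_disjoint_bunion B P :
  all (fun C => [disjoint B & C]) P = [disjoint B & bunion P].
Proof.
elim: P => [|C P IH] /=; first by rewrite bunion_nil fdisjointX0.
by rewrite bunion_cons fdisjointXU IH.
Qed.

Lemma is_scomp_cons B P :
  is_scomp (B :: P) = [&& B != fset0, [disjoint B & bunion P]%fset & is_scomp P].
Proof.
rewrite /is_scomp pairwise_cons /= -all_disjoint_bunion.
by case: (B != fset0); case: (all _ P); case: (all _ P).
Qed.

Lemma is_scomp_cat P Q :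
  is_scomp (P ++ Q) = [&& is_scomp P, is_scomp Q & [disjoint bunion P & bunion Q]%fset].
Proof.
elim: P => [|B P IH] /=; first by rewrite bunion_nil fdisjoint0X andbT.
rewrite !is_scomp_cons IH bunion_cat fdisjointXU bunion_cons fdisjointUX.
by case: (B != fset0); case: [disjoint B & bunion P]; case: [disjoint B & bunion Q];
  case: (is_scomp P); case: (is_scomp Q); case: [disjoint bunion P & bunion Q].
Qed.

Lemma is_scomp_take a P : is_scomp P -> is_scomp (take a P).
Proof. by rewrite -{1}(cat_take_drop a P) is_scomp_cat => /and3P[]. Qed.

Lemma is_scomp_drop a P : is_scomp P -> is_scomp (drop a P).
Proof. by rewrite -{1}(cat_take_drop a P) is_scomp_cat => /and3P[]. Qed.

Lemma disjoint_bunion_take_drop a P : is_scomp P ->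
  [disjoint bunion (take a P) & bunion (drop a P)].
Proof. by rewrite -{1}(cat_take_drop a P) is_scomp_cat => /and3P[]. Qed.

Lemma cardfsU_disjoint (A B : {fset nat}) : [disjoint A & B] ->
  #|` A `|` B| = (#|` A| + #|` B|)%N.
Proof. by move=> /eqP disj_AB; rewrite -cardfsUI disj_AB cardfs0 addn0. Qed.

Lemma deg_is_scomp P : is_scomp P -> deg P = #|` bunion P|.
Proof.
elim: P => [|B P IH]; first by rewrite bunion_nil cardfs0.
rewrite is_scomp_cons => /and3P[_ disj_B scP].
by rewrite deg_cons IH // bunion_cons cardfsU_disjoint.
Qed.

Lemma imfset_neq0 (f : nat -> nat) (B : {fset nat}) :
  ([fset f x | x in B] != fset0) = (B != fset0).
Proof.
apply/idP/idP; first by apply: contraNN => /eqP ->; rewrite imfset0.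
by case/fset0Pn => x x_in; apply/fset0Pn; exists (f x); apply: in_imfset.
Qed.

Lemma fdisjoint_imfset_inj (f : nat -> nat) (U B C : {fset nat}) :
  {in U &, injective f} -> {subset B <= U} -> {subset C <= U} ->
  [disjoint [fset f x | x in B] & [fset f x | x in C]] = [disjoint B & C].
Proof.
move=> f_inj sub_BU sub_CU; apply/fdisjointP/fdisjointP => disj x.
  move=> x_in; apply/negP => x_in_C.
  by move: (disj _ (in_imfset _ f x_in)); rewrite (in_imfset _ f x_in_C).
case/imfsetP => /= b b_in ->; apply/negP; case/imfsetP => /= c c_in eq_fbc.
have eq_bc : b = c by apply: f_inj; [exact: sub_BU | exact: sub_CU | exact: eq_fbc].
by move: (disj b b_in); rewrite eq_bc c_in.
Qed.

Section InjectiveRelabelling.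
Variables (f : nat -> nat) (P : scomp).
Hypothesis f_inj : {in bunion P &, injective f}.

Let imP := [seq [fset f x | x in B] | B : {fset nat} <- P].

Lemma is_scomp_imfset : is_scomp P -> is_scomp imP.
Proof.
rewrite /imP; elim: P f_inj => [|B Q IH] // f_injBQ.
rewrite /= !is_scomp_cons imfset_neq0 bunion_imfset => /and3P[-> disj_B scQ] /=.
have sub_B : {subset B <= bunion (B :: Q)}.
  by move=> x x_in; rewrite bunion_cons in_fsetU x_in.
have sub_Q : {subset bunion Q <= bunion (B :: Q)}.
  by move=> x x_in; rewrite bunion_cons in_fsetU x_in orbT.
rewrite (fdisjoint_imfset_inj f_injBQ) // disj_B IH //.
by move=> x y /sub_Q x_in /sub_Q y_in; apply: f_injBQ.
Qed.

Lemma deg_imfset : deg imP = deg P.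
Proof.
rewrite /imP; elim: P f_inj => [|B Q IH] // f_injBQ; rewrite /= !deg_cons IH; last first.
  by move=> x y x_in y_in; apply: f_injBQ; rewrite bunion_cons in_fsetU ?x_in ?y_in orbT.
congr (_ + _)%N; apply/eqP/card_in_imfsetP => x y x_in y_in; apply: f_injBQ;
  by rewrite bunion_cons in_fsetU ?x_in ?y_in.
Qed.

End InjectiveRelabelling.

Lemma size_std P : size (std P) = size P.
Proof. by rewrite size_map. Qed.

Lemma size_relabel A P : size (relabel A P) = size P.
Proof. by rewrite size_map. Qed.

Lemma frank_image U : [fset frank U x | x in U] = natrange #|` U|.
Proof.
apply/fsetP => i; rewrite mem_natrange; apply/imfsetP/idP => [[x /= x_in ->]|i_range].
  exact: frank_range.
by exists (fnth U i); [exact: fnth_mem | rewrite frank_fnth].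
Qed.

Lemma fnth_image U : [fset fnth U i | i in natrange #|` U|] = U.
Proof.
apply/fsetP => x; apply/imfsetP/idP => [[i /= + ->]|x_in].
  by rewrite mem_natrange; apply: fnth_mem.
by exists (frank U x); rewrite ?fnth_frank //= mem_natrange frank_range.
Qed.

Lemma bunion_std P : bunion (std P) = natrange #|` bunion P|.
Proof. by rewrite /std bunion_imfset frank_image. Qed.

Lemma is_scomp_std P : is_scomp P -> is_scomp (std P).
Proof. by apply: is_scomp_imfset; apply: frank_inj. Qed.

Lemma deg_std P : deg (std P) = deg P.
Proof. by apply: deg_imfset; apply: frank_inj. Qed.

Lemma is_comp_std P : is_scomp P -> is_comp (deg P) (std P).
Proof.
move=> scP; rewrite /is_comp is_setcompE is_scomp_std //.
by rewrite bunion_std deg_is_scomp ?eqxx.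
Qed.

Lemma imfset_id_in (f : nat -> nat) (V : {fset nat}) :
  {in V, forall x, f x = x} -> [fset f x | x in V] = V.
Proof.
move=> f_id; apply/fsetP => x; apply/imfsetP/idP => [[y /= y_in ->]|x_in].
  by rewrite f_id.
by exists x; rewrite ?f_id.
Qed.

Lemma relabel_std P : relabel (bunion P) (std P) = P.
Proof.
rewrite relabelE /std -map_comp -[RHS]map_id; apply/eq_in_map => B B_in /=.
rewrite -imfset_comp; apply: imfset_id_in => x x_in /=.
by rewrite fnth_frank // (block_sub_bunion B_in).
Qed.

Lemma bunion_relabel A P : bunion P = natrange #|` A| -> bunion (relabel A P) = A.
Proof. by move=> eq_P; rewrite relabelE bunion_imfset eq_P fnth_image. Qed.

Lemma std_relabel A P : is_setcomp (natrange #|` A|) P -> std (relabel A P) = P.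
Proof.
rewrite is_setcompE => /andP[_ /eqP eq_P].
rewrite /std bunion_relabel // relabelE -map_comp -[RHS]map_id.
apply/eq_in_map => B B_in /=; rewrite -imfset_comp; apply: imfset_id_in => i i_in /=.
by rewrite frank_fnth // -mem_natrange -eq_P (block_sub_bunion B_in).
Qed.

Lemma setcomp_relabel A P : is_setcomp (natrange #|` A|) P -> is_setcomp A (relabel A P).
Proof.
move=> setcomp_P; move: (setcomp_P); rewrite is_setcompE => /andP[scP /eqP eq_P].
rewrite is_setcompE bunion_relabel // eqxx andbT relabelE; apply: is_scomp_imfset => //.
by rewrite eq_P => i j; rewrite !mem_natrange; apply: fnth_inj.
Qed.

Lemma is_comp_scomp n P : is_comp n P -> is_scomp P.
Proof. by rewrite /is_comp is_setcompE => /andP[]. Qed.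

Lemma bunion_comp n P : is_comp n P -> bunion P = natrange n.
Proof. by rewrite /is_comp is_setcompE => /andP[_ /eqP]. Qed.

Lemma deg_comp n P : is_comp n P -> deg P = n.
Proof.
move=> compP.
by rewrite deg_is_scomp ?(is_comp_scomp compP) // (bunion_comp compP) card_natrange.
Qed.

Lemma in_Comp_deg P : in_Comp P -> is_comp (deg P) P.
Proof. by case=> n compP; rewrite (deg_comp compP). Qed.

Lemma frank_imfset_frank U V x : {subset V <= U} -> x \in V ->
  frank [fset frank U y | y in V] (frank U x) = frank V x.
Proof.
move=> sub_VU x_in.
rewrite (@frank_enum _ _ [seq frank U y | y <- [seq y <- enum_fset V | y <= x]]).
- by rewrite size_map size_filter.
- rewrite map_inj_in_uniq ?filter_uniq ?fset_uniq // => a b.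
  by rewrite !mem_filter => /andP[_ /sub_VU a_in] /andP[_ /sub_VU b_in]; apply: frank_inj.
move=> y; apply/mapP/idP => [[z] |].
  rewrite mem_filter => /andP[le_zx z_in] ->.
  by rewrite in_imfset //= leq_frank ?sub_VU.
case/andP => /imfsetP [z /= z_in ->]; rewrite leq_frank ?sub_VU // => le_zx.
by exists z; rewrite // mem_filter le_zx.
Qed.

Lemma std_imfset_frank U P : {subset bunion P <= U} ->
  std [seq [fset frank U x | x in B] | B : {fset nat} <- P] = std P.
Proof.
move=> sub_PU; rewrite /std bunion_imfset -map_comp; apply/eq_in_map => B B_in /=.
rewrite -imfset_comp; apply: eq_in_imfset => x x_in /=.
by rewrite frank_imfset_frank // (block_sub_bunion B_in).
Qed.

Lemma std_take a P : std (take a (std P)) = std (take a P).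
Proof.
rewrite [std P]/std -map_take std_imfset_frank // => x x_in.
by rewrite (bunion_take_drop a P) in_fsetU x_in.
Qed.

Lemma std_drop a P : std (drop a (std P)) = std (drop a P).
Proof.
rewrite [std P]/std -map_drop std_imfset_frank // => x x_in.
by rewrite (bunion_take_drop a P) in_fsetU x_in orbT.
Qed.

Lemma frank_prefix U x : (forall y, 0 < y <= x -> y \in U) -> (forall y, y \in U -> 0 < y) ->
  frank U x = x.
Proof.
move=> prefix_U pos_U; rewrite (@frank_enum _ _ (iota 1 x)) ?size_iota ?iota_uniq // => y.
rewrite mem_iota add1n ltnS; apply/idP/idP => [/andP[y_pos le_yx]|/andP[/pos_U -> ->]] //.
by rewrite prefix_U ?y_pos.
Qed.

Lemma frank_natrange n x : x \in natrange n -> frank (natrange n) x = x.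
Proof.
rewrite mem_natrange => /andP[_ le_xn]; apply: frank_prefix => y.
  by rewrite mem_natrange => /andP[-> /leq_trans ->].
by rewrite mem_natrange => /andP[].
Qed.

Lemma std_id n P : is_setcomp (natrange n) P -> std P = P.
Proof.
rewrite is_setcompE => /andP[_ /eqP eq_P].
rewrite /std -[RHS]map_id; apply/eq_in_map => B B_in /=; rewrite eq_P.
by apply: imfset_id_in => x x_in; rewrite frank_natrange // -eq_P (block_sub_bunion B_in).
Qed.

Lemma relabel_natrange n P : is_setcomp (natrange n) P -> relabel (natrange n) P = P.
Proof.
move=> setcomp_P; rewrite -{1}(std_id setcomp_P).
by move: setcomp_P; rewrite is_setcompE => /andP[_ /eqP <-]; rewrite relabel_std.
Qed.

End SetCompositions.

Section Shuffles.
Local Open Scope fset_scope.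

Section OrdinalSubsets.
Variable N : nat.
Implicit Type A : {set 'I_N}.

Definition ord_set (U : {fset nat}) : {set 'I_N} := [set i : 'I_N | i.+1 \in U].

Lemma mem_ofin A (i : 'I_N) : (i.+1 \in ofin A) = (i \in A).
Proof.
apply/imfsetP/idP => [[j /= + [/val_inj ->]]|i_in]; first by rewrite mem_enum.
by exists i; rewrite /= ?mem_enum.
Qed.

Lemma ofin_natrange A : {subset ofin A <= natrange N}.
Proof. by move=> x /imfsetP[i _ ->]; rewrite mem_natrange /=. Qed.

Lemma card_ofin A : #|` ofin A| = #|A|.
Proof. by rewrite card_imfset /= ?undup_id ?enum_uniq -?cardE // => i j [/val_inj]. Qed.

Lemma natrange_ord x : x \in natrange N -> exists i : 'I_N, x = i.+1.
Proof.
rewrite mem_natrange => /andP[x_pos le_xN]; have lt_x1N : x.-1 < N by rewrite prednK.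
by exists (Ordinal lt_x1N); rewrite prednK.
Qed.

Lemma ofin_ord_set U : {subset U <= natrange N} -> ofin (ord_set U) = U.
Proof.
move=> sub_U; apply/fsetP => x; apply/idP/idP => [|x_in].
  by case/imfsetP => i; rewrite mem_enum inE => + ->.
by have [i x_eq] := natrange_ord (sub_U x x_in); rewrite x_eq mem_ofin inE -x_eq.
Qed.

Lemma ord_set_ofin A : ord_set (ofin A) = A.
Proof. by apply/setP => i; rewrite inE mem_ofin. Qed.

Lemma ofinC A : ofin (~: A) = natrange N `\` ofin A.
Proof.
apply/fsetP => x; rewrite in_fsetD.
have [x_in | x_out] := boolP (x \in natrange N); last first.
  by rewrite andbF; apply: contraNF x_out; apply: ofin_natrange.
by have [i ->] := natrange_ord x_in; rewrite !mem_ofin inE andbT.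
Qed.

End OrdinalSubsets.

Lemma count_pred_single (T : eqType) (a : pred T) (s : seq T) y0 :
  {in s, forall y, a y -> y = y0} -> count a s = count_mem y0 s * a y0.
Proof.
elim: s => [|y s IH] //= a_single; rewrite mulnDl IH => [|z z_in]; last first.
  by apply: a_single; rewrite in_cons z_in orbT.
congr (_ + _)%N; have [a_y | /negbTE a_y] := boolP (a y).
  by rewrite (a_single y (mem_head _ _) a_y) eqxx -(a_single y (mem_head _ _) a_y) a_y.
by case: eqP => [<-|]; rewrite ?a_y.
Qed.

Definition shuffleb (P Q R : scomp) : bool :=
  [&& is_comp (deg P + deg Q) R, std (take (size P) R) == P & std (drop (size P) R) == Q].

Definition shuffle_term N (A : {set 'I_N}) (P Q : scomp) : scomp :=
  relabel (ofin A) P ++ relabel (ofin (~: A)) Q.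

Section ShuffleTerms.
Variables P Q : scomp.
Hypotheses (compP : is_comp (deg P) P) (compQ : is_comp (deg Q) Q).
Local Notation N := (deg P + deg Q)%N.

Lemma card_setC_deg (A : {set 'I_N}) : #|A| = deg P -> #|~: A| = deg Q.
Proof. by move=> cardA; apply/eqP; rewrite -(eqn_add2l (deg P)) -{1}cardA cardsC card_ord. Qed.

Lemma setcomp_ofin_shuffle (A : {set 'I_N}) : #|A| = deg P ->
  is_setcomp (natrange #|` ofin A|) P /\ is_setcomp (natrange #|` ofin (~: A)|) Q.
Proof. by move=> cardA; rewrite !card_ofin cardA card_setC_deg. Qed.

Lemma shuffleb_shuffle_term (A : {set 'I_N}) : #|A| = deg P ->
  shuffleb P Q (shuffle_term A P Q).
Proof.
move=> cardA; have [setcompP setcompQ] := setcomp_ofin_shuffle cardA.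
rewrite /shuffleb /shuffle_term take_size_cat ?drop_size_cat ?size_relabel //.
rewrite !std_relabel // !eqxx !andbT /is_comp is_setcompE is_scomp_cat bunion_cat.
move: (setcomp_relabel setcompP) (setcomp_relabel setcompQ).
rewrite !is_setcompE ofinC => /andP[-> /eqP ->] /andP[-> /eqP ->] /=.
apply/andP; split; first by apply/fdisjointP => x x_in; rewrite in_fsetD x_in.
apply/eqP/fsetP => x; rewrite in_fsetU in_fsetD.
by case x_in: (x \in ofin _); rewrite //= (ofin_natrange x_in).
Qed.

Lemma bunion_take_shuffle_term (A : {set 'I_N}) : #|A| = deg P ->
  bunion (take (size P) (shuffle_term A P Q)) = ofin A.
Proof.
move=> cardA; have [setcompP _] := setcomp_ofin_shuffle cardA.
by rewrite take_size_cat ?size_relabel // bunion_relabel //; case/andP: setcompP => _ /eqP.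
Qed.

Lemma shuffleb_shuffle_termP R : shuffleb P Q R ->
  let A := ord_set N (bunion (take (size P) R)) in #|A| = deg P /\ shuffle_term A P Q = R.
Proof.
case/and3P => compR /eqP std_take_R /eqP std_drop_R.
set U := bunion (take (size P) R).
have bunionR := bunion_comp compR; have scR := is_comp_scomp compR.
have ofin_U : ofin (ord_set N U) = U.
  by apply: ofin_ord_set => x x_in; rewrite -bunionR (bunion_take_drop (size P)) in_fsetU x_in.
have card_U : #|` U| = deg P.
  by rewrite -(card_natrange #|` U|) -bunion_std std_take_R (bunion_comp compP) card_natrange.
have drop_U : natrange N `\` U = bunion (drop (size P) R).
  apply/fsetP => x; rewrite in_fsetD -bunionR (bunion_take_drop (size P)) in_fsetU.
  case x_in: (x \in U) => //=.
  by move/fdisjointP: (disjoint_bunion_take_drop (size P) scR) => /(_ x x_in) /negbTE ->.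
split; first by rewrite -card_ofin ofin_U card_U.
rewrite /shuffle_term ofinC ofin_U drop_U -{1}std_take_R -std_drop_R.
by rewrite !relabel_std cat_take_drop.
Qed.

Lemma count_shuffle_terms R : count_mem R (shuffle_terms P Q) = shuffleb P Q R.
Proof.
rewrite [shuffle_terms P Q]/shuffle_terms -/(shuffle_term _ P Q) count_map.
set A0 := ord_set N (bunion (take (size P) R)).
rewrite (@count_pred_single _ _ _ A0) => [|A]; last first.
  rewrite mem_enum inE => /eqP cardA /= /eqP eq_R.
  by rewrite /A0 -eq_R bunion_take_shuffle_term // ord_set_ofin.
rewrite count_uniq_mem ?enum_uniq // mem_enum inE mulnb; congr nat_of_bool.
apply/idP/idP => [/andP[/eqP cardA /eqP <-]|/shuffleb_shuffle_termP[cardA0 <-]].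
  exact: shuffleb_shuffle_term.
by rewrite cardA0 eqxx; apply/eqP.
Qed.

End ShuffleTerms.

Lemma mem_shuffle_terms P Q R : is_comp (deg P) P -> is_comp (deg Q) Q ->
  (R \in shuffle_terms P Q) = shuffleb P Q R.
Proof.
by move=> compP compQ; rewrite -has_pred1 has_count count_shuffle_terms //; case: shuffleb.
Qed.

Lemma shuffle_terms_uniq P Q : is_comp (deg P) P -> is_comp (deg Q) Q ->
  uniq (shuffle_terms P Q).
Proof.
move=> compP compQ; apply: count_mem_uniq => R.
by rewrite count_shuffle_terms ?mem_shuffle_terms.
Qed.

End Shuffles.

Section AlgebraStructure.

Definition shuffleb3 (P Q S R : scomp) : bool :=
  [&& is_comp (deg P + deg Q + deg S) R, std (take (size P) R) == P,
      std (take (size Q) (drop (size P) R)) == Q & std (drop (size P + size Q) R) == S].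

Lemma size_shuffleb P Q R : shuffleb P Q R -> size R = size P + size Q.
Proof.
case/and3P => _ /eqP/(congr1 size); rewrite size_std => size_P.
move=> /eqP/(congr1 size); rewrite size_std => size_Q.
by rewrite -{1}(cat_take_drop (size P) R) size_cat size_P size_Q.
Qed.

Lemma comp_shuffleb P Q R : shuffleb P Q R -> is_comp (deg R) R.
Proof. by case/and3P => compR _ _; rewrite (deg_comp compR). Qed.

Lemma shuffleb_assocl P Q S R :
  let T := std (take (size P + size Q) R) in
  shuffleb P Q T && shuffleb T S R = shuffleb3 P Q S R.
Proof.
move=> T; set a := size P; set b := size Q; set Y := take (a + b) R.
have take_Y : take a Y = take a R by rewrite /Y take_takel // leq_addr.
have drop_Y : drop a Y = take b (drop a R) by rewrite take_drop addnC.
rewrite /shuffleb /shuffleb3 /T std_take std_drop take_Y drop_Y size_std.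
have size_R R' : std (take a R') = P -> std (take b (drop a R')) = Q -> a + b <= size R'.
  move=> /(congr1 size) + /(congr1 size); rewrite !size_std !size_take size_drop -/a -/b.
  by clearbody a b; case: ltnP => ? ?; case: ltnP => ? ?; lia.
apply/idP/idP.
- case/andP => /and3P[compT /eqP stdP /eqP stdQ] /and3P[+ _ /eqP stdS].
  rewrite (deg_comp compT) /Y size_takel ?size_R // in stdS * => ->.
  by rewrite stdP stdQ stdS !eqxx.
case/and4P => compR /eqP stdP /eqP stdQ /eqP stdS.
have degY : deg Y = deg P + deg Q.
  by rewrite (deg_take_drop a) take_Y drop_Y -stdP -stdQ !deg_std.
have compT : is_comp (deg P + deg Q) (std Y).
  by rewrite -degY is_comp_std // is_scomp_take // (is_comp_scomp compR).
by rewrite compT stdP stdQ (deg_comp compT) /Y size_takel ?size_R // compR stdS !eqxx.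
Qed.

Lemma shuffleb_assocr P Q S R :
  let T := std (drop (size P) R) in
  shuffleb Q S T && shuffleb P T R = shuffleb3 P Q S R.
Proof.
move=> T; set a := size P; set b := size Q; set D := drop a R.
have drop_D : drop b D = drop (a + b) R by rewrite /D drop_drop addnC.
rewrite /shuffleb /shuffleb3 /T std_take std_drop drop_D.
apply/idP/idP.
- case/andP => /and3P[compT /eqP stdQ /eqP stdS] /and3P[+ /eqP stdP _].
  by rewrite (deg_comp compT) addnA => ->; rewrite stdP stdQ stdS !eqxx.
case/and4P => compR /eqP stdP /eqP stdQ /eqP stdS.
have degD : deg D = deg Q + deg S by rewrite (deg_take_drop b D) drop_D -stdQ -stdS !deg_std.
have compT : is_comp (deg Q + deg S) (std D).
  by rewrite -degD is_comp_std // is_scomp_drop // (is_comp_scomp compR).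
by rewrite compT stdQ stdS (deg_comp compT) addnA compR stdP !eqxx.
Qed.

Lemma sum_nat_bool (T : Type) (a : pred T) (s : seq T) : \sum_(x <- s) a x = count a s.
Proof. by rewrite -sumn_count sumnE big_map. Qed.

Lemma count_shuffle_terms_assoc P Q S R :
  is_comp (deg P) P -> is_comp (deg Q) Q -> is_comp (deg S) S ->
  \sum_(T <- shuffle_terms P Q) count_mem R (shuffle_terms T S) =
  \sum_(T <- shuffle_terms Q S) count_mem R (shuffle_terms P T).
Proof.
move=> compP compQ compS.
rewrite (eq_big_seq (fun T => nat_of_bool (shuffleb T S R))) => [|T]; last first.
  by rewrite mem_shuffle_terms // => /comp_shuffleb compT; rewrite count_shuffle_terms.
rewrite [RHS](eq_big_seq (fun T => nat_of_bool (shuffleb P T R))) => [|T]; last first.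
  by rewrite mem_shuffle_terms // => /comp_shuffleb compT; rewrite count_shuffle_terms.
rewrite !sum_nat_bool (@count_pred_single _ _ _ (std (take (size P + size Q) R))); last first.
  move=> T; rewrite mem_shuffle_terms // => shuffleT /and3P[_ /eqP <- _].
  by rewrite (size_shuffleb shuffleT).
rewrite [RHS](@count_pred_single _ _ _ (std (drop (size P) R))); last first.
  by move=> T _ /and3P[_ _ /eqP].
rewrite !count_uniq_mem ?shuffle_terms_uniq // !mem_shuffle_terms // !mulnb.
by rewrite shuffleb_assocl shuffleb_assocr.
Qed.

Local Open Scope ring_scope.

Definition tlin (x : Tel) (h : scomp -> int) : int := \sum_(e <- x) e.1 * h e.2.

Lemma tcoefE x P : tcoef x P = tlin x (fun T => (T == P)%:R).
Proof.
rewrite /tcoef /tlin big_mkcond /=; apply: eq_bigr => e _.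
by case: (e.2 == P); rewrite ?mulr1 ?mulr0.
Qed.

Lemma tlin_flatten xs h : tlin (flatten xs) h = \sum_(x <- xs) tlin x h.
Proof. by rewrite /tlin big_flatten. Qed.

Lemma tlin_const_coef a s h : tlin [seq (a, T) | T <- s] h = a * \sum_(T <- s) h T.
Proof. by rewrite /tlin big_map mulr_sumr. Qed.

Lemma tlin_tmul x y h : tlin (tmul x y) h =
  \sum_(e <- x) \sum_(f <- y) e.1 * f.1 * \sum_(T <- shuffle_terms e.2 f.2) h T.
Proof.
rewrite /tmul tlin_flatten big_flatten /= big_map; apply: eq_bigr => e _.
by rewrite big_map; apply: eq_bigr => f _; apply: tlin_const_coef.
Qed.

Lemma sum_indicator (s : seq scomp) R : \sum_(T <- s) (T == R)%:R = (count_mem R s)%:Z.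
Proof. by elim: s => [|T s IH]; rewrite ?big_nil ?big_cons ?IH //= PoszD; case: (T == R). Qed.

Lemma Posz_sum (T : Type) (s : seq T) (F : T -> nat) :
  (\sum_(i <- s) F i)%N%:Z = \sum_(i <- s) (F i)%:Z.
Proof. exact: (big_morph Posz PoszD). Qed.

Lemma tcoef_tmul_tmul_l x y z R : tcoef (tmul (tmul x y) z) R =
  \sum_(e <- x) \sum_(f <- y) \sum_(g <- z) e.1 * f.1 * g.1 *
    (\sum_(T <- shuffle_terms e.2 f.2) count_mem R (shuffle_terms T g.2))%N%:Z.
Proof.
rewrite tcoefE.
transitivity (tlin (tmul x y)
  (fun T => \sum_(g <- z) g.1 * (count_mem R (shuffle_terms T g.2))%:Z)).
  rewrite tlin_tmul /tlin; apply: eq_bigr => u _; rewrite mulr_sumr; apply: eq_bigr => g _.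
  by rewrite sum_indicator mulrA.
rewrite tlin_tmul; apply: eq_bigr => e _; apply: eq_bigr => f _.
rewrite exchange_big mulr_sumr; apply: eq_bigr => g _.
by rewrite Posz_sum !mulr_sumr; apply: eq_bigr => T _; ring.
Qed.

Lemma tcoef_tmul_tmul_r x y z R : tcoef (tmul x (tmul y z)) R =
  \sum_(e <- x) \sum_(f <- y) \sum_(g <- z) e.1 * f.1 * g.1 *
    (\sum_(T <- shuffle_terms f.2 g.2) count_mem R (shuffle_terms e.2 T))%N%:Z.
Proof.
rewrite tcoefE tlin_tmul; apply: eq_bigr => e _.
transitivity (e.1 * tlin (tmul y z) (fun T => (count_mem R (shuffle_terms e.2 T))%:Z)).
  by rewrite /tlin mulr_sumr; apply: eq_bigr => v _; rewrite sum_indicator mulrA.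
rewrite tlin_tmul mulr_sumr; apply: eq_bigr => f _; rewrite mulr_sumr; apply: eq_bigr => g _.
by rewrite Posz_sum !mulr_sumr; apply: eq_bigr => T _; ring.
Qed.

Lemma tmul_assoc x y z : valid x -> valid y -> valid z ->
  teq (tmul (tmul x y) z) (tmul x (tmul y z)).
Proof.
move=> vx vy vz R; rewrite tcoef_tmul_tmul_l tcoef_tmul_tmul_r.
apply: eq_big_seq => e /vx/in_Comp_deg compe; apply: eq_big_seq => f /vy/in_Comp_deg compf.
apply: eq_big_seq => g /vz/in_Comp_deg compg.
by rewrite count_shuffle_terms_assoc.
Qed.

Lemma is_comp_nil : is_comp 0 [::].
Proof. by rewrite /is_comp is_setcompE bunion_nil eq_sym -cardfs_eq0 card_natrange. Qed.

Lemma shuffleb_nil_l Q R : is_comp (deg Q) Q -> shuffleb [::] Q R = (Q == R).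
Proof.
move=> compQ; rewrite /shuffleb /= take0 drop0 eqxx add0n.
have [<-|neq_QR] := eqVneq Q R; first by rewrite compQ (std_id compQ) eqxx.
by apply/negbTE; apply: contra neq_QR => /andP[compR /eqP <-]; rewrite (std_id compR).
Qed.

Lemma shuffleb_nil_r P R : is_comp (deg P) P -> shuffleb P [::] R = (P == R).
Proof.
move=> compP; rewrite /shuffleb addn0.
have [<-|neq_PR] := eqVneq P R.
  by rewrite compP take_size drop_size (std_id compP) !eqxx.
apply/negbTE; apply: contra neq_PR => /and3P[compR /eqP std_take_R /eqP /(congr1 size)].
rewrite size_std size_drop => /eqP; rewrite subn_eq0 => le_R_P.
by rewrite -std_take_R take_oversize // (std_id compR).
Qed.

Lemma tmul_unit x : valid x -> teq (tmul tunit x) x /\ teq (tmul x tunit) x.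
Proof.
move=> vx; split=> R; rewrite !tcoefE tlin_tmul /tlin.
  rewrite big_seq1; apply: eq_big_seq => f /vx/in_Comp_deg compf.
  rewrite sum_indicator count_shuffle_terms ?is_comp_nil ?shuffleb_nil_l // mul1r.
  by case: eqP.
apply: eq_big_seq => e /vx/in_Comp_deg compe; rewrite big_seq1.
rewrite sum_indicator count_shuffle_terms ?is_comp_nil ?shuffleb_nil_r // mulr1.
by case: eqP.
Qed.

End AlgebraStructure.

Section Cuts.
Local Open Scope fset_scope.
Local Open Scope nat_scope.

Definition is_cut (R : scomp) (a : nat) : bool :=
  bunion (take a R) == natrange #|` bunion (take a R)|.

Definition ncuts (R : scomp) : nat := count (is_cut R) (iota 1 (size R)).

Lemma bunion_drop_comp n a R : is_comp n R ->
  bunion (drop a R) = natrange n `\` bunion (take a R).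
Proof.
move=> compR; apply/fsetP => x.
rewrite in_fsetD -(bunion_comp compR) [bunion R](bunion_take_drop a) in_fsetU.
case x_in: (x \in bunion (take a R)) => //=.
by have /fdisjointP/(_ x x_in)/negbTE := disjoint_bunion_take_drop a (is_comp_scomp compR).
Qed.

Lemma frank_restrict W V x : {subset V <= W} -> x \in V ->
  (forall y, y \in W -> y <= x -> y \in V) -> frank W x = frank V x.
Proof.
move=> sub_VW x_in down_V.
rewrite (@frank_enum W x [seq y <- enum_fset V | y <= x]) ?size_filter //.
  by rewrite filter_uniq ?fset_uniq.
move=> y; rewrite mem_filter andbC.
by apply/idP/idP => [/andP[/sub_VW -> ->]|/andP[y_in le_yx]]; rewrite ?down_V.
Qed.

Section CutsOfShuffles.
Variables g T R : scomp.
Hypothesis shuffle_R : shuffleb g T R.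

Lemma is_cut_shuffleb_size :
  is_cut R (size g) = (bunion (take (size g) R) == natrange (deg g)).
Proof.
case/and3P: shuffle_R => compR /eqP std_take_R _.
by rewrite /is_cut -(deg_is_scomp (is_scomp_take _ (is_comp_scomp compR))) -deg_std std_take_R.
Qed.

Lemma no_cut_shuffleb_reduced a : is_comp (deg g) g -> reduced (deg g) g ->
  0 < a < size g -> ~~ is_cut R a.
Proof.
move=> compg red_g /andP[a_pos lt_a_g]; apply/negP => /eqP cut_a.
case/and3P: shuffle_R => compR /eqP std_take_R _.
set X := take (size g) R in std_take_R; set V := bunion (take a R) in cut_a.
have take_X : take a R = take a X by rewrite /X take_takel // ltnW.
have sub_VX : {subset V <= bunion X}.
  by move=> x; rewrite /V take_X (bunion_take_drop a X) in_fsetU => ->.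
have range_X : {subset bunion X <= natrange (deg g + deg T)}.
  by move=> x; rewrite -(bunion_comp compR) (bunion_take_drop (size g) R) in_fsetU => ->.
(* Ranks in [bunion X] fix the initial segment [V], so [V] would be a cut of [g]. *)
have bunion_take_g : bunion (take a g) = V.
  rewrite -std_take_R /std -map_take bunion_imfset -take_X -/V.
  apply: imfset_id_in => x; rewrite {1}cut_a mem_natrange => /andP[_ le_xV].
  apply: frank_prefix => [y /andP[y_pos le_yx]|y /range_X].
    by apply: sub_VX; rewrite cut_a mem_natrange y_pos (leq_trans le_yx).
  by rewrite mem_natrange => /andP[].
have scg := is_comp_scomp compg.
apply: red_g; exists a, #|` V|; split => //; last by rewrite bunion_take_g.
rewrite (deg_take_drop a g) (deg_is_scomp (is_scomp_take a scg)) bunion_take_g.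
rewrite -ltn_subLR // subnn.
have : drop a g != [::] by rewrite -size_eq0 size_drop subn_eq0 -ltnNge.
case: (drop a g) (is_scomp_drop a scg) => [|B D] //.
by rewrite is_scomp_cons deg_cons -cardfs_gt0 => /and3P[B_ne0 _ _] _; apply: ltn_addr.
Qed.

Lemma is_cut_shuffleb_shift b : is_cut R (size g + b) -> is_cut T b.
Proof.
case/and3P: shuffle_R => compR /eqP std_take_R /eqP std_drop_R /eqP cut.
set X := take (size g) R in std_take_R cut; set Y := drop (size g) R in std_drop_R.
have size_X : size X = size g by rewrite -std_take_R size_std.
have take_R : take (size g + b) R = X ++ take b Y.
  by rewrite -{1}(cat_take_drop (size g) R) take_cat size_X ltnNge leq_addr /= addKn.
move: cut; rewrite take_R bunion_cat.
set U := bunion X; set V := bunion (take b Y); set W := bunion Y => cut.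
have [m {}cut] : exists m, U `|` V = natrange m by exists #|` U `|` V|.
have sub_VW : {subset V <= W} by move=> x; rewrite /V /W (bunion_take_drop b Y) in_fsetU => ->.
have range_W : {subset W <= natrange (deg g + deg T)}.
  move=> x; rewrite -(bunion_comp compR) (bunion_take_drop (size g) R) in_fsetU.
  by move=> ->; rewrite orbT.
have disj_UW := disjoint_bunion_take_drop (size g) (is_comp_scomp compR).
(* [U `|` V] is an initial segment disjoint from [W], so [V] is an initial part of [W]. *)
have down_V x y : x \in V -> y \in W -> y <= x -> y \in V.
  move=> x_in y_in le_yx; have : y \in U `|` V.
    rewrite cut mem_natrange; have := range_W y y_in; rewrite mem_natrange => /andP[-> _] /=.
    apply: leq_trans le_yx _; have : x \in U `|` V by rewrite in_fsetU x_in orbT.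
    by rewrite cut mem_natrange => /andP[].
  rewrite in_fsetU => /orP[y_in_U|//].
  by move/fdisjointP: disj_UW => /(_ y y_in_U); rewrite y_in.
have bunion_take_T : bunion (take b T) = natrange #|` V|.
  rewrite -std_drop_R /std -map_take bunion_imfset -/V -/W -(frank_image V).
  apply: eq_in_imfset => x x_in /=.
  by apply: frank_restrict => // y y_in; apply: down_V.
by rewrite /is_cut bunion_take_T card_natrange.
Qed.

End CutsOfShuffles.

Lemma count_iota_first (a : pred nat) k : 0 < k -> (forall i, 0 < i < k -> ~~ a i) ->
  count a (iota 1 k) = a k.
Proof.
move=> k_pos not_a; have -> : k = k.-1 + 1 by lia.
rewrite iotaD count_cat /= addn0 add1n addn1 prednK //.
rewrite (@eq_in_count _ _ pred0) ?count_pred0 // => i; rewrite mem_iota => i_range.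
by apply/negbTE/not_a; lia.
Qed.

Lemma ncuts_shuffleb_split g T R : shuffleb g T R ->
  ncuts R = count (is_cut R) (iota 1 (size g)) +
            count (fun b => is_cut R (size g + b)) (iota 1 (size T)).
Proof.
move=> shuffle_R; rewrite /ncuts (size_shuffleb shuffle_R) iotaD count_cat.
by congr (_ + _); rewrite addnC iotaDl count_map.
Qed.

Section ReducedShuffles.
Variables g T R : scomp.
Hypotheses (compg : is_comp (deg g) g) (g_ne0 : g != [::]) (red_g : reduced (deg g) g).
Hypothesis shuffle_R : shuffleb g T R.

Lemma count_cuts_shuffleb_reduced :
  count (is_cut R) (iota 1 (size g)) = (bunion (take (size g) R) == natrange (deg g)).
Proof.
rewrite count_iota_first ?lt0n ?size_eq0 ?(is_cut_shuffleb_size shuffle_R) // => a.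
exact: (no_cut_shuffleb_reduced shuffle_R).
Qed.

Lemma ncuts_shuffleb_reduced :
  ncuts R <= (bunion (take (size g) R) == natrange (deg g)) + ncuts T.
Proof.
rewrite (ncuts_shuffleb_split shuffle_R) count_cuts_shuffleb_reduced leq_add2l.
exact/sub_count/is_cut_shuffleb_shift.
Qed.

End ReducedShuffles.

Definition shift_range (p q : nat) : {fset nat} := natrange (p + q) `\` natrange p.

Definition shift_cat (g T : scomp) : scomp := g ++ relabel (shift_range (deg g) (deg T)) T.

Lemma mem_shift_range p q x : (x \in shift_range p q) = (p < x <= p + q).
Proof. by rewrite in_fsetD !mem_natrange; case: (ltnP p x) => /=; lia. Qed.

Lemma card_shift_range p q : #|` shift_range p q| = q.
Proof.
rewrite cardfsDS ?card_natrange ?addKn //.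
by apply/fsubsetP => x; rewrite !mem_natrange; lia.
Qed.

Lemma natrangeU_shift_range p q : natrange p `|` shift_range p q = natrange (p + q).
Proof. by apply/fsetP => x; rewrite in_fsetU mem_shift_range !mem_natrange; lia. Qed.

Lemma disjoint_natrange_shift_range p q : [disjoint natrange p & shift_range p q].
Proof. by apply/fdisjointP => x; rewrite mem_shift_range mem_natrange; lia. Qed.

Lemma fnth_shift_range p q i : 0 < i <= q -> fnth (shift_range p q) i = p + i.
Proof.
move=> i_range; have pi_in : p + i \in shift_range p q by rewrite mem_shift_range; lia.
have frank_pi : frank (shift_range p q) (p + i) = i.
  rewrite (@frank_enum _ _ (iota p.+1 i)) ?size_iota ?iota_uniq // => y.
  by rewrite mem_iota mem_shift_range; lia.
by rewrite -{1}frank_pi fnth_frank.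
Qed.

Lemma bunion_relabel_shift_range p q m P : bunion P = natrange m -> m <= q ->
  bunion (relabel (shift_range p q) P) = shift_range p m.
Proof.
move=> bunion_P le_mq; rewrite relabelE bunion_imfset bunion_P.
apply/fsetP => x; rewrite mem_shift_range; apply/imfsetP/idP => [[i /= + ->]|x_range].
  by rewrite mem_natrange => i_range; rewrite fnth_shift_range; lia.
by exists (x - p); rewrite /= ?mem_natrange ?fnth_shift_range; lia.
Qed.

Section ShiftCat.
Variables g T : scomp.
Hypotheses (compg : is_comp (deg g) g) (compT : is_comp (deg T) T).

Lemma shuffleb_shift_cat : shuffleb g T (shift_cat g T).
Proof.
have setcompT : is_setcomp (natrange #|` shift_range (deg g) (deg T)|) T.
  by rewrite card_shift_range.
rewrite /shuffleb /shift_cat take_size_cat ?drop_size_cat // (std_id compg).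
rewrite std_relabel // !eqxx !andbT /is_comp is_setcompE is_scomp_cat bunion_cat.
move: (setcomp_relabel setcompT) compg; rewrite /is_comp !is_setcompE.
move=> /andP[-> /eqP ->] /andP[-> /eqP ->].
by rewrite disjoint_natrange_shift_range natrangeU_shift_range eqxx.
Qed.

Lemma shift_cat_cut R : shuffleb g T R ->
  bunion (take (size g) R) = natrange (deg g) -> R = shift_cat g T.
Proof.
case/and3P => compR /eqP std_take_R /eqP std_drop_R bunion_take_R.
rewrite /shift_cat -{1}(cat_take_drop (size g) R); congr (_ ++ _).
  rewrite -{1}(relabel_std (take (size g) R)) std_take_R bunion_take_R.
  exact: relabel_natrange compg.
rewrite -{1}(relabel_std (drop (size g) R)) std_drop_R.
by rewrite (bunion_drop_comp _ compR) bunion_take_R.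
Qed.

Lemma ncuts_shift_cat : g != [::] -> reduced (deg g) g -> ncuts (shift_cat g T) = (ncuts T).+1.
Proof.
move=> g_ne0 red_g; have shuffle_gT := shuffleb_shift_cat.
rewrite (ncuts_shuffleb_split shuffle_gT).
rewrite (count_cuts_shuffleb_reduced compg g_ne0 red_g shuffle_gT).
rewrite /shift_cat take_size_cat // (bunion_comp compg) eqxx add1n; congr _.+1.
apply: eq_in_count => b; rewrite mem_iota => b_range /=.
apply/idP/idP; first exact: (is_cut_shuffleb_shift shuffle_gT).
rewrite /is_cut => /eqP; set m := #|` bunion (take b T)| => bunion_take_T.
have le_mT : m <= deg T.
  rewrite /m -(card_natrange (deg T)) -(bunion_comp compT).
  by apply: fsubset_leq_card; rewrite (bunion_take_drop b T) fsubsetUl.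
rewrite take_cat ltnNge leq_addr /= addKn relabelE -map_take -relabelE.
rewrite bunion_cat (bunion_comp compg) (bunion_relabel_shift_range _ bunion_take_T) //.
by rewrite natrangeU_shift_range card_natrange.
Qed.

End ShiftCat.

End Cuts.

Section LeadingTerms.
Local Open Scope fset_scope.
Local Open Scope nat_scope.

Fixpoint shift_catw (w : seq scomp) : scomp :=
  if w is g :: w' then shift_cat g (shift_catw w') else [::].

Fixpoint word_terms (w : seq scomp) : seq scomp :=
  if w is g :: w' then flatten [seq shuffle_terms g T | T <- word_terms w'] else [:: [::]].

Definition gen_word (w : seq scomp) : Prop := forall g, g \in w -> generator g.

Lemma monomialE w : monomial w = [seq (1%R, T) | T <- word_terms w].
Proof.
elim: w => [|g w IH] //=; rewrite IH /tmul /= cats0 map_flatten -!map_comp.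
by congr flatten; apply: eq_map => T /=; apply: eq_map.
Qed.

Lemma generator_deg g : generator g -> [/\ is_comp (deg g) g, g != [::] & reduced (deg g) g].
Proof. by case=> n [compg /eqP g_ne0 red_g]; rewrite (deg_comp compg). Qed.

Lemma gen_word_cons g w : gen_word (g :: w) -> generator g /\ gen_word w.
Proof.
by move=> gen_gw; split=> [|h h_in]; apply: gen_gw; rewrite ?mem_head ?in_cons ?h_in ?orbT.
Qed.

Lemma word_terms_comp w : gen_word w -> {in word_terms w, forall R, is_comp (deg R) R}.
Proof.
elim: w => [_ R|g w IH /gen_word_cons[/generator_deg[compg _ _] /IH compw] R].
  by rewrite inE => /eqP ->; apply: is_comp_nil.
case/flattenP => _ /mapP[T T_in ->].
by rewrite mem_shuffle_terms ?(compw T T_in) // => /comp_shuffleb.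
Qed.

Lemma mem_word_terms_cons g w R : gen_word (g :: w) -> R \in word_terms (g :: w) ->
  exists2 T, T \in word_terms w & shuffleb g T R.
Proof.
move=> gen_gw /flattenP[_ /mapP[T T_in ->] R_in]; exists T => //.
have [/generator_deg[compg _ _] gen_w] := gen_word_cons gen_gw.
by rewrite -mem_shuffle_terms ?(word_terms_comp gen_w T_in).
Qed.

Lemma word_terms_ncuts w : gen_word w -> {in word_terms w, forall R, ncuts R <= size w}.
Proof.
elim: w => [_ R|g w IH gen_gw R /(mem_word_terms_cons gen_gw)[T T_in shuffle_R]].
  by rewrite inE => /eqP ->.
have [/generator_deg[compg g_ne0 red_g] /IH ncuts_w] := gen_word_cons gen_gw.
apply: leq_trans (ncuts_shuffleb_reduced compg g_ne0 red_g shuffle_R) _.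
by case: (_ == _); rewrite ?add1n ?add0n ?ltnS ?ncuts_w ?(leq_trans (ncuts_w T T_in)).
Qed.

Lemma is_comp_shift_catw w : gen_word w -> is_comp (deg (shift_catw w)) (shift_catw w).
Proof.
elim: w => [_|g w IH /gen_word_cons[/generator_deg[compg _ _] /IH compw]] /=.
  exact: is_comp_nil.
exact: comp_shuffleb (shuffleb_shift_cat compg compw).
Qed.

Lemma ncuts_shift_catw w : gen_word w -> ncuts (shift_catw w) = size w.
Proof.
elim: w => [//|g w IH /gen_word_cons[/generator_deg[compg g_ne0 red_g] gen_w]] /=.
by rewrite ncuts_shift_cat ?IH ?is_comp_shift_catw.
Qed.

Lemma count_word_terms_leading w R : gen_word w -> ncuts R = size w ->
  count_mem R (word_terms w) = (R == shift_catw w).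
Proof.
elim: w R => [R _|g w IH R gen_gw]; first by rewrite /ncuts; case: R.
have [/generator_deg[compg g_ne0 red_g] gen_w] := gen_word_cons gen_gw.
move=> ncuts_R; rewrite [shift_catw _]/=.
set C := shift_catw w; set T1 := std (drop (size g) R).
have shuffle_C := shuffleb_shift_cat compg (is_comp_shift_catw gen_w).
have -> : count_mem R (word_terms (g :: w)) = count (shuffleb g ^~ R) (word_terms w).
  rewrite count_flatten -map_comp -sumn_count; congr sumn; apply/eq_in_map => T T_in /=.
  by rewrite count_shuffle_terms ?(word_terms_comp gen_w T_in).
rewrite (@count_pred_single _ _ _ T1) => [|T _ /and3P[_ _ /eqP] //].
have [R_eq | R_neq] := eqVneq R (shift_cat g C).
  have T1_eq : T1 = C by rewrite /T1 R_eq; case/and3P: shuffle_C => _ _ /eqP.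
  by rewrite R_eq T1_eq shuffle_C muln1 IH ?eqxx ?ncuts_shift_catw.
have [T1_in|T1_out] := boolP (T1 \in word_terms w); last by rewrite (count_memPn T1_out).
suff /negbTE-> : ~~ shuffleb g T1 R by rewrite muln0.
apply: contra R_neq => shuffle_R.
have := ncuts_shuffleb_reduced compg g_ne0 red_g shuffle_R.
rewrite ncuts_R; have := word_terms_ncuts gen_w T1_in.
case: eqP => [cut_R le_T1 | _ le_T1]; last first.
  by rewrite add0n => /leq_trans/(_ le_T1); rewrite ltnn.
rewrite add1n ltnS => ge_T1.
have ncuts_T1 : ncuts T1 = size w by apply/eqP; rewrite eqn_leq le_T1.
have : count_mem T1 (word_terms w) != 0 by rewrite -lt0n -has_count has_pred1.
by rewrite IH // eqb0 negbK => /eqP T1_eq; rewrite (shift_cat_cut compg shuffle_R cut_R) T1_eq.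
Qed.

Lemma shift_cat_neq0 g T : g != [::] -> shift_cat g T != [::].
Proof. by case: g. Qed.

Lemma shift_catw_inj w w' : gen_word w -> gen_word w' ->
  shift_catw w = shift_catw w' -> w = w'.
Proof.
elim: w w' => [|g w IH] [|g' w'] //= gen_w gen_w'.
- have [/generator_deg[_ g'_ne0 _] _] := gen_word_cons gen_w'.
  by move/esym/eqP; rewrite (negbTE (shift_cat_neq0 _ g'_ne0)).
- have [/generator_deg[_ g_ne0 _] _] := gen_word_cons gen_w.
  by move/eqP; rewrite (negbTE (shift_cat_neq0 _ g_ne0)).
have [/generator_deg[compg g_ne0 red_g] gen_v] := gen_word_cons gen_w.
have [/generator_deg[compg' g'_ne0 red_g'] gen_v'] := gen_word_cons gen_w'.
move=> eq_R; set R := shift_cat g' (shift_catw w') in eq_R.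
have shuffle_R := shuffleb_shift_cat compg (is_comp_shift_catw gen_v).
have shuffle_R' := shuffleb_shift_cat compg' (is_comp_shift_catw gen_v').
rewrite eq_R -/R in shuffle_R.
have cut_g : is_cut R (size g).
  rewrite (is_cut_shuffleb_size shuffle_R) -eq_R /shift_cat take_size_cat //.
  by rewrite (bunion_comp compg).
have cut_g' : is_cut R (size g').
  rewrite (is_cut_shuffleb_size shuffle_R') /R /shift_cat take_size_cat //.
  by rewrite (bunion_comp compg').
have size_g : size g = size g'.
  case: (ltngtP (size g) (size g')) => // lt_g.
    have := no_cut_shuffleb_reduced shuffle_R' compg' red_g' (a := size g).
    by rewrite lt_g lt0n size_eq0 g_ne0 cut_g => /(_ isT).
  have := no_cut_shuffleb_reduced shuffle_R compg red_g (a := size g').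
  by rewrite lt_g lt0n size_eq0 g'_ne0 cut_g' => /(_ isT).
case/and3P: shuffle_R shuffle_R' => _ /eqP std_take /eqP std_drop.
case/and3P => _ /eqP std_take' /eqP std_drop'.
have eq_g : g = g' by rewrite -std_take -std_take' size_g.
have eq_w : w = w' by apply: IH => //; rewrite -std_drop -std_drop' size_g.
by rewrite eq_g eq_w.
Qed.

Section FirstCut.
Variables (n : nat) (P : scomp) (a : nat).
Hypotheses (compP : is_comp n P) (cut_a : is_cut P a).

Lemma bunion_take_cut : bunion (take a P) = natrange (deg (take a P)).
Proof. by rewrite (deg_is_scomp (is_scomp_take a (is_comp_scomp compP))); apply/eqP. Qed.

Lemma comp_take_cut : is_comp (deg (take a P)) (take a P).
Proof.
by rewrite /is_comp is_setcompE is_scomp_take ?(is_comp_scomp compP) // bunion_take_cut eqxx.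
Qed.

Lemma shift_cat_take_drop_cut : shift_cat (take a P) (std (drop a P)) = P.
Proof.
rewrite /shift_cat /shift_range deg_std -deg_take_drop (deg_comp compP).
by rewrite -bunion_take_cut -(bunion_drop_comp _ compP) relabel_std cat_take_drop.
Qed.

Lemma reduced_take_first_cut : a <= size P -> (forall b, 0 < b < a -> ~~ is_cut P b) ->
  reduced (deg (take a P)) (take a P).
Proof.
move=> le_aP no_cut [b [m [b_pos lt_b _ bunion_b]]].
have take_b : take b (take a P) = take b P by rewrite take_takel // -(size_takel le_aP) ltnW.
have /negP[] : ~~ is_cut P b by apply: no_cut; rewrite b_pos -(size_takel le_aP).
by rewrite /is_cut -take_b bunion_b card_natrange.
Qed.

End FirstCut.

Lemma shift_catw_surj n P : is_comp n P -> exists2 w, gen_word w & shift_catw w = P.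
Proof.
have [k] := ubnP (size P); elim: k n P => // k IH n P size_P compP.
have [->|P_ne0] := eqVneq P [::]; first by exists [::].
have cut_size : is_cut P (size P).
  by rewrite /is_cut take_size (bunion_comp compP) card_natrange.
have ex_cut : exists a, (0 < a) && is_cut P a.
  by exists (size P); rewrite cut_size lt0n size_eq0 P_ne0.
case: (ex_minnP ex_cut) => a /andP[a_pos cut_a] min_a.
have le_aP : a <= size P by apply: min_a; rewrite cut_size lt0n size_eq0 P_ne0.
have no_cut b : 0 < b < a -> ~~ is_cut P b.
  by case/andP=> b_pos lt_ba; apply: contraTN lt_ba => cut_b; rewrite -leqNgt min_a ?b_pos.
have gen_g : generator (take a P).
  exists (deg (take a P)); split; first exact: comp_take_cut compP cut_a.
    by apply/eqP; rewrite -size_eq0 size_takel // -lt0n.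
  exact: reduced_take_first_cut.
have compT := is_comp_std (is_scomp_drop a (is_comp_scomp compP)).
have [|w gen_w catw_T] := IH _ (std (drop a P)) _ compT.
  by rewrite size_std size_drop; move: size_P; rewrite ltnS; lia.
exists (take a P :: w); last by rewrite /= catw_T (shift_cat_take_drop_cut compP cut_a).
by move=> h; rewrite in_cons => /orP[/eqP ->|/gen_w].
Qed.

End LeadingTerms.

Section FreeBasis.
Local Open Scope ring_scope.

Definition gen_comb (c : seq (int * seq scomp)) : Prop := forall e, e \in c -> gen_word e.2.

Lemma tcoef_nil R : tcoef [::] R = 0.
Proof. by rewrite /tcoef big_nil. Qed.

Lemma tcoef_cat x y R : tcoef (x ++ y) R = tcoef x R + tcoef y R.
Proof. by rewrite /tcoef big_cat. Qed.

Lemma tcoef_tscale a x R : tcoef (tscale a x) R = a * tcoef x R.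
Proof. by rewrite !tcoefE /tlin big_map mulr_sumr; apply: eq_bigr => e _; rewrite mulrA. Qed.

Lemma tcoef_basis P R : tcoef (basis_el P) R = (P == R)%:R.
Proof. by rewrite tcoefE /tlin big_seq1 mul1r. Qed.

Lemma tcoef_monomial w R : tcoef (monomial w) R = (count_mem R (word_terms w))%:Z.
Proof. by rewrite monomialE tcoefE tlin_const_coef sum_indicator mul1r. Qed.

Lemma tcoef_lincomb c R : tcoef (lincomb c) R = \sum_(e <- c) e.1 * tcoef (monomial e.2) R.
Proof.
rewrite /lincomb tcoefE tlin_flatten big_map; apply: eq_bigr => e _.
by rewrite -tcoefE tcoef_tscale.
Qed.

Lemma lincomb_cons e c : lincomb (e :: c) = tscale e.1 (monomial e.2) ++ lincomb c.
Proof. by []. Qed.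

Lemma lincomb_cat c c' : lincomb (c ++ c') = lincomb c ++ lincomb c'.
Proof. by rewrite /lincomb map_cat flatten_cat. Qed.

Lemma tcoef_lincomb_opp c R :
  tcoef (lincomb [seq (- e.1, e.2) | e <- c]) R = - tcoef (lincomb c) R.
Proof. by rewrite !tcoef_lincomb big_map -sumrN; apply: eq_bigr => e _; rewrite mulNr. Qed.

Lemma count_mem_filter_neq (T : eqType) (s : seq T) x y :
  count_mem y s = (count_mem y [seq z <- s | z != x] + (x == y) * count_mem x s)%N.
Proof.
elim: s => [|z s IH] /=; first by rewrite muln0.
rewrite {}IH mulnDr; have [->|neq_zx] := eqVneq z x; last by rewrite /= muln0 add0n addnA.
by rewrite /= muln1 addnA addnCA addnA.
Qed.

Lemma lincomb_count_span (s : seq scomp) :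
  (forall T, T \in s -> exists c, gen_comb c /\ teq (basis_el T) (lincomb c)) ->
  exists c, gen_comb c /\ forall R, tcoef (lincomb c) R = (count_mem R s)%:Z.
Proof.
elim: s => [|T s IH] span_s; first by exists [::]; split => // R; rewrite tcoef_nil.
have [cT [gen_cT span_T]] := span_s T (mem_head _ _).
have span_s' T' : T' \in s -> exists c, gen_comb c /\ teq (basis_el T') (lincomb c).
  by move=> T'_in; apply: span_s; rewrite in_cons T'_in orbT.
have [c [gen_c coef_c]] := IH span_s'.
exists (cT ++ c); split => [e|R].
  by rewrite mem_cat => /orP[/gen_cT|/gen_c].
by rewrite lincomb_cat tcoef_cat -span_T coef_c tcoef_basis /= PoszD; case: eqP.
Qed.

Lemma basis_el_span P : in_Comp P ->
  exists c, gen_comb c /\ teq (basis_el P) (lincomb c).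
Proof.
(* [monomial w] is [P] plus terms with fewer cuts, which are spanned by induction. *)
have [k] := ubnP (ncuts P); elim: k P => // k IH P ncuts_P [n compP].
have [w gen_w catw_P] := shift_catw_surj compP.
set rest := [seq R <- word_terms w | R != P].
have span_rest T : T \in rest -> exists c, gen_comb c /\ teq (basis_el T) (lincomb c).
  rewrite mem_filter => /andP[T_neq T_in]; apply: IH; last first.
    by exists (deg T); apply: word_terms_comp T_in.
  rewrite -ltnS (leq_trans _ ncuts_P) // ltnS -catw_P ncuts_shift_catw //.
  rewrite ltn_neqAle (word_terms_ncuts gen_w T_in) andbT.
  apply: contra T_neq => /eqP ncuts_T.
  have := count_word_terms_leading gen_w ncuts_T; rewrite catw_P; case: (T == P) => // /eqP.
  by rewrite -leqn0 leqNgt -has_count has_pred1 T_in.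
have [c [gen_c coef_c]] := lincomb_count_span span_rest.
exists ((1, w) :: [seq (- e.1, e.2) | e <- c]); split => [e|R].
  by rewrite in_cons => /orP[/eqP -> //|/mapP[e' /gen_c gen_e' ->]].
rewrite lincomb_cons tcoef_cat tcoef_lincomb_opp coef_c tcoef_tscale mul1r tcoef_monomial.
rewrite tcoef_basis (count_mem_filter_neq _ P) count_word_terms_leading ?catw_P ?eqxx //.
  by rewrite muln1 PoszD addrC addKr; case: eqP.
by rewrite -catw_P ncuts_shift_catw.
Qed.

Lemma tcoef_monomial_shift_catw w w' :
  gen_word w -> gen_word w' -> (size w' <= size w)%N ->
  tcoef (monomial w') (shift_catw w) = (w' == w)%:R.
Proof.
move=> gen_w gen_w'; rewrite tcoef_monomial leq_eqVlt => /orP[/eqP size_eq|lt_w'w].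
  rewrite count_word_terms_leading ?ncuts_shift_catw //.
  have -> : (shift_catw w == shift_catw w') = (w' == w).
    by apply/eqP/eqP => [/(shift_catw_inj gen_w gen_w') ->|->].
  by case: eqP.
have -> : (w' == w) = false by apply: contraTF lt_w'w => /eqP ->; rewrite ltnn.
rewrite (count_memPn _) //; apply: contraTN lt_w'w => catw_in.
by rewrite -leqNgt -(ncuts_shift_catw gen_w) (word_terms_ncuts gen_w' catw_in).
Qed.

Lemma sum_coef_eq_snd (c : seq (int * seq scomp)) e0 : uniq (map snd c) -> e0 \in c ->
  \sum_(e <- c) e.1 * (e.2 == e0.2)%:R = e0.1.
Proof.
elim: c => [|e c IH] //= /andP[e_notin uniq_c]; rewrite in_cons big_cons.
case/orP => [/eqP ->|e0_in].
  rewrite eqxx mulr1 big1_seq ?addr0 // => e' /andP[_ e'_in].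
  case: eqP => [eq_2|_]; last by rewrite mulr0.
  by rewrite -eq_2 map_f in e_notin.
have -> : (e.2 == e0.2) = false by apply: contraNF e_notin => /eqP ->; apply: map_f.
by rewrite mulr0 add0r IH.
Qed.

Lemma lincomb_free c : uniq (map snd c) -> gen_comb c -> teq (lincomb c) [::] ->
  forall e, e \in c -> e.1 = 0.
Proof.
move=> uniq_c gen_c lincomb0 e0 e0_in; apply/eqP/negPn/negP => e0_ne0.
(* Among the words with nonzero coefficient, a longest one is the only word whose
   monomial contains its shifted concatenation. *)
pose nz_size n := has (fun e : int * seq scomp => (e.1 != 0) && (size e.2 == n)) c.
have ex_nz : exists n, nz_size n.
  by exists (size e0.2); apply/hasP; exists e0; rewrite ?e0_ne0 /=.
have ub_nz n : nz_size n -> (n <= \max_(e <- c) size e.2)%N.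
  case/hasP => e e_in /andP[_ /eqP <-].
  exact: (@leq_bigmax_seq _ _ xpredT (fun e => size e.2)).
case: (ex_maxnP ex_nz ub_nz) => L /hasP[es es_in /andP[es_ne0 /eqP size_es]] max_L.
have := lincomb0 (shift_catw es.2); rewrite tcoef_nil tcoef_lincomb.
rewrite (eq_big_seq (fun e => e.1 * (e.2 == es.2)%:R)) => [|e e_in].
  by rewrite sum_coef_eq_snd // => /eqP; rewrite (negbTE es_ne0).
have [->|e_ne0] := eqVneq e.1 0; first by rewrite !mul0r.
rewrite tcoef_monomial_shift_catw ?size_es; [by []|exact: gen_c|exact: gen_c|].
by apply: max_L; apply/hasP; exists e; rewrite ?e_ne0 /=.
Qed.

End FreeBasis.

Theorem theorem3p4 :
  (* (T_bullet, hat-ast) is an associative unital algebra *)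
  (forall x y z, valid x -> valid y -> valid z ->
     teq (tmul (tmul x y) z) (tmul x (tmul y z))) /\
  (forall x, valid x -> teq (tmul tunit x) x /\ teq (tmul x tunit) x) /\
  (* the monomials in the generators span T_bullet *)
  (forall P, in_Comp P ->
     exists c : seq (int * seq scomp),
       (forall e, e \in c -> forall g, g \in e.2 -> generator g) /\
       teq (basis_el P) (lincomb c)) /\
  (* distinct monomials in the generators are linearly independent *)
  (forall c : seq (int * seq scomp),
     uniq (map snd c) ->
     (forall e, e \in c -> forall g, g \in e.2 -> generator g) ->
     teq (lincomb c) [::] ->
     forall e, e \in c -> e.1 = 0%R).
Proof.
split; first exact: tmul_assoc.
split; first exact: tmul_unit.
split; first exact: basis_el_span.
exact: lincomb_free.
Qed.
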